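(* Let $n=m=1$, so that $A,B\in\mathbb{R}$ and $Q,R>0$ are scalars, and consider the setting described in the context with $q<q_c$ and an estimate $\hat q\in[0,q_c)$. Then the certainty-equivalence gain $\hat K=-(R+B^2\hat P)^{-1}AB\hat P$ mean-square stabilizes the system $x_{t+1}=Ax_t+\lambda_tBu_t$ under $u_t=\hat Kx_t$ if and only if $$Q+(1-q)R\hat K^2+(\hat q-q)(R+B^2\hat P)^{-1}A^2B^2\hat P^2>0 .$$ Moreover, if $\hat q\ge q$, this inequality holds.
   Context: Let $A\in\mathbb{R}^{n\times n}$, $B\in\mathbb{R}^{n\times m}$ with $(A,B)$ stabilizable, and let $Q\in\mathbb{R}^{n\times n}$, $R\in\mathbb{R}^{m\times m}$ be symmetric positive definite. Consider $x_{t+1}=Ax_t+\lambda_tBu_t$, $t=0,1,2,\dots$, where $x_0$ is a random vector with finite mean and covariance and $\{\lambda_t\}$ are i.i.d. Bernoulli random variables, independent of $x_0$, with $\mathcal{P}(\lambda_t=0)=q$, $\mathcal{P}(\lambda_t=1)=1-q$, $q\in(0,1)$. For $p\in[0,1)$ the modified Riccati equation with parameter $p$ is $X=Q+A^\top XA-(1-p)A^\top XB(R+B^\top XB)^{-1}B^\top XA$. The number $q_c$ is the critical loss probability: for every $p\in[0,q_c)$ this equation has a unique positive definite solution (one has $1/\prod_i|\lambda_i^u(A)|^2\le q_c\le 1/\max_i|\lambda_i^u(A)|^2$, where $\lambda_i^u(A)$ are the eigenvalues of $A$ of modulus $\ge1$). For an estimate $\hat q\in[0,q_c)$ of $q$,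 $\hat P$ denotes the positive definite solution of the modified Riccati equation with parameter $\hat q$, and $\hat K=-(R+B^\top\hat PB)^{-1}B^\top\hat PA$. The gain $\hat K$ mean-square stabilizes the system if the closed loop $x_{t+1}=(A+\lambda_tB\hat K)x_t$ satisfies $\lim_{t\to\infty}\mathbb{E}\{x_t^\top x_t\}=0$. *)

From HB Require Import structures.
From mathcomp Require Import all_boot all_order all_algebra.
From mathcomp Require Import all_classical all_reals all_analysis.
Set Implicit Arguments. Unset Strict Implicit. Unset Printing Implicit Defensive.
Import Order.TTheory GRing.Theory Num.Theory numFieldNormedType.Exports.
Local Open Scope ring_scope.
Local Open Scope classical_set_scope.

Section Defs.
Variable R : realType.

Definition stabilizable (A B : R) : Prop := exists K : R, `|A + B * K| < 1.

Definition mare (A B Q Rw p X : R) : Prop :=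
  X = Q + A * X * A - (1 - p) * (A * X * B) * (Rw + B * X * B)^-1 * (B * X * A).

Definition unique_pos_sol (A B Q Rw p : R) : Prop :=
  exists X : R, [/\ 0 < X, mare A B Q Rw p X &
                    forall Y : R, 0 < Y -> mare A B Q Rw p Y -> Y = X].

Definition qc (A B Q Rw : R) : R :=
  sup [set p : R | 0 <= p <= 1 /\
        forall r : R, 0 <= r -> r < p -> unique_pos_sol A B Q Rw r].

(* closed loop x_{t+1} = (A + lambda_t B K) x_t for a realization l of the
   packet-arrival sequence (true = lambda_t = 1). *)
Fixpoint traj (A B K x0 : R) (l : nat -> bool) (t : nat) : R :=
  match t with
  | 0 => x0
  | t'.+1 => (A + (l t')%:R * B * K) * traj A B K x0 l t'
  end.

Definition bprob (q : R) (b : bool) : R := if b then 1 - q else q.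

Definition ext_real (t : nat) (f : {ffun 'I_t -> bool}) : nat -> bool :=
  fun i => match insub i with Some j => f j | None => false end.

(* expectation over i.i.d. Bernoulli(1-q) lambda_0..lambda_{t-1} of a
   functional of the realization *)
Definition bexp (q : R) (t : nat) (F : (nat -> bool) -> R) : R :=
  \sum_(f : {ffun 'I_t -> bool}) (\prod_(i < t) bprob q (f i)) * F (ext_real f).

Definition ms_stabilizes (A B K q : R) : Prop :=
  forall x0 : R,
    (fun t : nat => bexp q t (fun l => (traj A B K x0 l t) ^+ 2)) @ \oo --> (0 : R^o).

End Defs.

(* The closed-loop state is x0 times a product of i.i.d. factors A + lambda_t B Kh,
   so E{x_t^2} = x0^2 rho^t with rho = q A^2 + (1 - q) (A + B Kh)^2, and mean-square
   stability means rho < 1.  Rewriting the modified Riccati equation for Ph shows that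
   the quantity in the theorem is exactly (1 - rho) Ph; as Ph > 0 it is positive iff
   rho < 1.  For qh >= q all of its three summands are nonnegative and Q > 0. *)
From HB Require Import structures.
From mathcomp Require Import all_boot all_order all_algebra.
From mathcomp Require Import all_classical all_reals all_analysis.
From mathcomp Require Import ring.
Set Implicit Arguments.
Unset Strict Implicit.
Unset Printing Implicit Defensive.
Import Order.TTheory GRing.Theory Num.Theory.
Local Open Scope ring_scope.
Local Open Scope classical_set_scope.

Section MeanSquareStability.
Variable R : realType.
Implicit Types (A B K Q Rw q qh Ph : R).

Lemma traj_prod A B K (x0 : R) l t :
  traj A B K x0 l t = x0 * \prod_(i < t) (A + (l i)%:R * B * K).
Proof.
elim: t => [|t IH] /=; first by rewrite big_ord0 mulr1.
by rewrite IH big_ord_recr /= [RHS]mulrA mulrC.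
Qed.

Lemma bexpZ q t c (F : (nat -> bool) -> R) :
  bexp q t (fun l => c * F l) = c * bexp q t F.
Proof. by rewrite /bexp mulr_sumr; apply: eq_bigr => f _; rewrite mulrCA. Qed.

Lemma bexp_prod q t (g : bool -> R) :
  bexp q t (fun l => \prod_(i < t) g (l i)) = (\sum_b bprob q b * g b) ^+ t.
Proof.
rewrite -[in RHS](card_ord t) -prodr_const bigA_distr_bigA.
apply: eq_bigr => f _; rewrite -big_split /=.
by apply: eq_bigr => i _; rewrite /ext_real valK.
Qed.

Definition second_moment_rate q A B K := q * A ^+ 2 + (1 - q) * (A + B * K) ^+ 2.

Lemma second_moment_rate_ge0 q A B K :
  0 <= q <= 1 -> 0 <= second_moment_rate q A B K.
Proof.
by case/andP=> q0 q1; rewrite addr_ge0 // mulr_ge0 // ?sqr_ge0 // subr_ge0.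
Qed.

Lemma second_moment_traj q A B K (x0 : R) t :
  bexp q t (fun l => traj A B K x0 l t ^+ 2) =
  geometric (x0 ^+ 2) (second_moment_rate q A B K) t.
Proof.
under eq_fun do rewrite traj_prod exprMn -prodrXl.
rewrite bexpZ (@bexp_prod q t (fun b => (A + b%:R * B * K) ^+ 2)) big_bool /= /bprob.
by rewrite mul1r !mul0r addr0 addrC.
Qed.

Lemma geometric_cvg0_lt1 (a z : R) :
  a != 0 -> geometric a z @ \oo --> 0 -> `|z| < 1.
Proof.
rewrite -normr_gt0 => a0 /cvgr0_norm_lt /(_ _ a0) [N _ /(_ N (leqnn N))] /=.
rewrite ltNge normrM normrX; apply: contraNT; rewrite -leNgt => z1.
by rewrite ler_peMr // exprn_ege1.
Qed.

Lemma ms_stabilizesP q A B K : 0 <= q <= 1 ->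
  ms_stabilizes A B K q <-> second_moment_rate q A B K < 1.
Proof.
move=> q01; have rate0 := second_moment_rate_ge0 A B K q01.
have moments x0 : (fun t => bexp q t (fun l => traj A B K x0 l t ^+ 2)) =
    geometric (x0 ^+ 2) (second_moment_rate q A B K).
  by apply/funext => t; exact: second_moment_traj.
split=> [/(_ 1) | rate1 x0]; rewrite moments.
- by move/geometric_cvg0_lt1; rewrite expr1n ger0_norm //; apply; rewrite oner_neq0.
- by apply: cvg_geometric; rewrite ger0_norm.
Qed.

Definition ce_gain A B Rw Ph := - (Rw + B ^+ 2 * Ph)^-1 * (A * B * Ph).

Lemma mare_second_moment_rate A B Q Rw q qh Ph :
  Rw + B ^+ 2 * Ph != 0 -> mare A B Q Rw qh Ph ->
  Q + (1 - q) * Rw * ce_gain A B Rw Ph ^+ 2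
    + (qh - q) * (Rw + B ^+ 2 * Ph)^-1 * (A ^+ 2 * B ^+ 2 * Ph ^+ 2)
  = (1 - second_moment_rate q A B (ce_gain A B Rw Ph)) * Ph.
Proof.
rewrite /mare => S0 /eqP; rewrite -subr_eq0 => /eqP M.
have S0' : Rw + B * Ph * B != 0 by rewrite mulrAC -expr2.
by rewrite -[LHS]addr0 -M /second_moment_rate /ce_gain; field.
Qed.

End MeanSquareStability.

Theorem theorem1 (R : realType) (A B Q Rw q qh Ph : R) :
  stabilizable A B -> 0 < Q -> 0 < Rw ->
  0 < q -> q < 1 -> q < qc A B Q Rw ->
  0 <= qh -> qh < qc A B Q Rw ->
  0 < Ph -> mare A B Q Rw qh Ph ->
  let Kh := - (Rw + B ^+ 2 * Ph)^-1 * (A * B * Ph) in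
  (ms_stabilizes A B Kh q <->
     0 < Q + (1 - q) * Rw * Kh ^+ 2
           + (qh - q) * (Rw + B ^+ 2 * Ph)^-1 * (A ^+ 2 * B ^+ 2 * Ph ^+ 2))
  /\ (q <= qh ->
     0 < Q + (1 - q) * Rw * Kh ^+ 2
           + (qh - q) * (Rw + B ^+ 2 * Ph)^-1 * (A ^+ 2 * B ^+ 2 * Ph ^+ 2)).
Proof.
(* Stabilizability and the bounds by qc only guarantee that Ph exists. *)
move=> _ Q0 Rw0 q0 q1 _ qh0 _ Ph0 M Kh; rewrite /Kh -/(ce_gain A B Rw Ph).
have S0 : 0 < Rw + B ^+ 2 * Ph by rewrite ltr_wpDr // mulr_ge0 ?sqr_ge0 ?ltW.
split=> [|qqh].
- rewrite ms_stabilizesP ?(ltW q0) ?(ltW q1) //.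
  by rewrite mare_second_moment_rate ?gt_eqF // pmulr_lgt0 // subr_gt0.
- rewrite ltr_wpDr ?ltr_wpDr //.
  + by rewrite -!exprMn mulr_ge0 ?divr_ge0 ?subr_ge0 ?sqr_ge0 ?(ltW S0).
  + by rewrite mulr_ge0 ?sqr_ge0 // mulr_ge0 ?subr_ge0 ?(ltW q1) ?(ltW Rw0).
Qed.
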